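(* Under the setting described in the context, let $m^*$ be a Nash equilibrium. Then for every $i\in\mathcal N$ and $j\in\mathcal R_i$, ${}^i\pi^*_j\big({}^ia^*_j-{}^{i^+}a^*_j\big)^2=0$ and ${}^{i^+}\pi^*_j\big({}^{i^+}a^*_j-{}^{i^{++}}a^*_j\big)^2=0$ (where $m^*_k=({}^ka^*_{\mathcal R_k},{}^k\pi^*_{\mathcal R_k})$). Consequently, for every $i\in\mathcal N$, $\hat t_i(m^* )=\sum_{j\in\mathcal R_i}l_{ij}(m^* )\,\hat a_j(m^* )$.
   Context: Let $N\ge 1$ and $\mathcal N=\{1,\dots,N\}$. For each $i\in\mathcal N$ a set $\mathcal R_i\subseteq\mathcal N$ with $i\in\mathcal R_i$ is given; for $j\in\mathcal N$ put $\mathcal C_j=\{k\in\mathcal N: j\in\mathcal R_k\}$, and assume $|\mathcal C_j|\ge 3$ for all $j$. Each $\mathcal A_i\subset\mathbb R$ is a nonempty convex compact set with $0\in\mathcal A_i$. For each $i$, $u_i:\mathbb R^{\mathcal R_i}\to\mathbb R\cup\{-\infty\}$ is concave, real-valued whenever $a_i\in\mathcal A_i$, and $-\infty$ whenever $a_i\notin\mathcal A_i$. Aggregate utility: $u_i^A(a_{\mathcal R_i},t_i)=-t_i+u_i(a_{\mathcal R_i})$ if $a_i\in\mathcal A_i$, else $-\infty$. Game form: message $m_i=({}^ia_{\mathcal R_i},{}^i\pi_{\mathcal R_i})\in\mathcal M_i=\mathbb R^{\mathcal R_i}\times\mathbb R_+^{\mathcal R_i}$; $\hat a_i(m)=\frac1{|\mathcal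 C_i|}\sum_{k\in\mathcal C_i}{}^ka_i$. For each $j$ fix a bijection $\mathcal I_{\cdot j}:\mathcal C_j\to\{1,\dots,|\mathcal C_j|\}$, write $\mathcal C_{j(k)}$ for the user with index $k$ in $\mathcal C_j$, indices cyclic modulo $|\mathcal C_j|$. For $i\in\mathcal N$, $j\in\mathcal R_i$ let $i^+=\mathcal C_{j(\mathcal I_{ij}+1)}$, $i^{++}=\mathcal C_{j(\mathcal I_{ij}+2)}$, $l_{ij}(m)={}^{i^+}\pi_j-{}^{i^{++}}\pi_j$, and $\hat t_i(m)=\sum_{j\in\mathcal R_i}\Big[l_{ij}(m)\hat a_j(m)+{}^i\pi_j({}^ia_j-{}^{i^+}a_j)^2-{}^{i^+}\pi_j({}^{i^+}a_j-{}^{i^{++}}a_j)^2\Big]$. A Nash equilibrium is $m^*$ such that for all $i$ and $m_i\in\mathcal M_i$, $u_i^A\big((\hat a_j(m^* ))_{j\in\mathcal R_i},\hat t_i(m^* )\big)\ge u_i^A\big((\hat a_j(m_i,m^*_{-i}))_{j\in\mathcal R_i},\hat t_i(m_i,m^*_{-i})\big)$. *)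

From Stdlib Require Import Reals List Permutation Arith.
From Stdlib Require Import Rtopology.
Import ListNotations.
Open Scope R_scope.

(* Users are 0 .. N-1 (0-based version of {1..N}).
   Rs i : list nat enumerates the set R_i (duplicate-free).
   A message profile m : nat -> (nat -> R) * (nat -> R),
   fst (m k) j = ^k a_j, snd (m k) j = ^k pi_j  (only j in R_k matter). *)

Inductive ER : Type := Fin (r : R) | NegInf.

Definition ER_le (x y : ER) : Prop :=
  match x, y with
  | NegInf, _ => True
  | Fin _, NegInf => False
  | Fin a, Fin b => a <= b
  end.

Definition lsum (l : list nat) (f : nat -> R) : R :=
  fold_right (fun k acc => f k + acc) 0 l.

Definition Cset (N : nat) (Rs : nat -> list nat) (j : nat) : list nat :=
  filter (fun k => if in_dec Nat.eq_dec j (Rs k) then true else false) (seq 0 N).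

Fixpoint index_of (x : nat) (l : list nat) : nat :=
  match l with
  | [] => 0
  | y :: t => if Nat.eq_dec x y then 0 else S (index_of x t)
  end.

(* o enumerates C_j; the position of an element in o is the bijection
   I_{.j} (0-based).  cyc_succ o i s = the user whose index is I_{ij}+s,
   cyclically modulo |C_j|. *)
Definition cyc_succ (o : list nat) (i s : nat) : nat :=
  nth ((index_of i o + s) mod length o) o 0%nat.

Definition profile := nat -> (nat -> R) * (nat -> R).

Definition update (m : profile) (i : nat) (mi : (nat -> R) * (nat -> R)) : profile :=
  fun k => if Nat.eq_dec k i then mi else m k.

Definition ahat (N : nat) (Rs : nat -> list nat) (m : profile) (j : nat) : R :=
  / INR (length (Cset N Rs j)) * lsum (Cset N Rs j) (fun k => fst (m k) j).

Definition iplus (ord : nat -> list nat) (i j : nat) : nat := cyc_succ (ord j) i 1.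
Definition iplus2 (ord : nat -> list nat) (i j : nat) : nat := cyc_succ (ord j) i 2.

Definition lij (ord : nat -> list nat) (m : profile) (i j : nat) : R :=
  snd (m (iplus ord i j)) j - snd (m (iplus2 ord i j)) j.

Definition that (N : nat) (Rs : nat -> list nat) (ord : nat -> list nat)
  (m : profile) (i : nat) : R :=
  lsum (Rs i) (fun j =>
    lij ord m i j * ahat N Rs m j
    + snd (m i) j * (fst (m i) j - fst (m (iplus ord i j)) j) ^ 2
    - snd (m (iplus ord i j)) j
        * (fst (m (iplus ord i j)) j - fst (m (iplus2 ord i j)) j) ^ 2).

Definition uA (u : nat -> (nat -> R) -> ER) (i : nat) (a : nat -> R) (t : R) : ER :=
  match u i a with
  | Fin r => Fin (- t + r)
  | NegInf => NegInf
  end.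

Definition admissible (Rs : nat -> list nat) (i : nat) (mi : (nat -> R) * (nat -> R)) : Prop :=
  forall j, In j (Rs i) -> 0 <= snd mi j.

Definition outcome_util (N : nat) (Rs : nat -> list nat) (ord : nat -> list nat)
  (u : nat -> (nat -> R) -> ER) (m : profile) (i : nat) : ER :=
  uA u i (fun j => ahat N Rs m j) (that N Rs ord m i).

Definition nash_equilibrium (N : nat) (Rs : nat -> list nat) (ord : nat -> list nat)
  (u : nat -> (nat -> R) -> ER) (m : profile) : Prop :=
  (forall i, (i < N)%nat -> admissible Rs i (m i)) /\
  (forall i, (i < N)%nat -> forall mi, admissible Rs i mi ->
     ER_le (outcome_util N Rs ord u (update m i mi) i) (outcome_util N Rs ord u m i)).

Definition setting (N : nat) (Rs : nat -> list nat) (ord : nat -> list nat)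
  (A : nat -> R -> Prop) (u : nat -> (nat -> R) -> ER) : Prop :=
  (1 <= N)%nat /\
  (forall i, (i < N)%nat ->
     NoDup (Rs i) /\ In i (Rs i) /\ (forall j, In j (Rs i) -> (j < N)%nat)) /\
  (forall j, (j < N)%nat -> (3 <= length (Cset N Rs j))%nat) /\
  (forall j, (j < N)%nat -> Permutation (ord j) (Cset N Rs j)) /\
  (forall i, (i < N)%nat ->
     (exists x, A i x) /\
     (forall x y lam, A i x -> A i y -> 0 <= lam <= 1 -> A i (lam * x + (1 - lam) * y)) /\
     compact (A i) /\ A i 0) /\
  (forall i, (i < N)%nat ->
     (forall a b, (forall j, In j (Rs i) -> a j = b j) -> u i a = u i b) /\
     (forall a, A i (a i) -> exists r, u i a = Fin r) /\
     (forall a, ~ A i (a i) -> u i a = NegInf) /\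
     (forall a b ra rb lam, 0 <= lam <= 1 -> u i a = Fin ra -> u i b = Fin rb ->
        exists r, u i (fun j => lam * a j + (1 - lam) * b j) = Fin r /\
                  lam * ra + (1 - lam) * rb <= r)).

From Stdlib Require Import Reals List Permutation Arith Rtopology.
From Stdlib Require Import Lra Lia.
Open Scope R_scope.

(* Fix an equilibrium m and a pair (i, j) with j in R_i.
   1. The equilibrium utility of every user i is finite: user i can move
      its proposed action ^i a_i so that \hat a_i becomes 0 in A_i, which
      yields a finite utility, and no deviation can beat the equilibrium.
   2. Setting the price ^i pi_j to 0 changes neither the actions \hat a
      nor any term of \hat t_i other than the penalty
      ^i pi_j (^i a_j - ^{i+} a_j)^2, which it removes (this uses that
      i^+ and i^{++} differ from i, as |C_j| >= 3).  Since the penalty is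
      nonnegative and the equilibrium utility is finite, the equilibrium
      condition forces the penalty to vanish.
   3. The second penalty of the pair (i, j) is the first penalty of the
      pair (i^+, j), because (i^+)^+ = i^{++}; hence it vanishes too, and
      \hat t_i reduces to its price-times-action part. *)

Lemma lsum_ext (l : list nat) (f g : nat -> R) :
  (forall x, In x l -> f x = g x) -> lsum l f = lsum l g.
Proof.
  induction l as [|a l IH]; simpl; intros Hfg; [reflexivity|].
  rewrite Hfg, IH; auto.
Qed.

Lemma lsum_upd (l : list nat) (f g : nat -> R) (i : nat) :
  NoDup l -> In i l -> (forall k, k <> i -> g k = f k) ->
  lsum l g = lsum l f - f i + g i.
Proof.
  induction l as [|a l IH]; simpl; intros Hnd Hi Hg; [contradiction|].
  inversion Hnd as [|? ? Ha Hnd']; subst.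
  destruct Hi as [<-|Hi].
  - rewrite (lsum_ext l g f); [lra|].
    intros x Hx. apply Hg. intros ->. contradiction.
  - rewrite (IH Hnd' Hi Hg), Hg; [lra|].
    intros ->. contradiction.
Qed.

Definition fupd (f : nat -> R) (j : nat) (c : R) : nat -> R :=
  fun k => if Nat.eq_dec k j then c else f k.

Lemma Cset_In (N : nat) (Rs : nat -> list nat) (j k : nat) :
  In k (Cset N Rs j) <-> (k < N)%nat /\ In j (Rs k).
Proof.
  unfold Cset. rewrite filter_In, in_seq.
  destruct (in_dec Nat.eq_dec j (Rs k)); intuition (try lia; try discriminate).
Qed.

Lemma Cset_NoDup (N : nat) (Rs : nat -> list nat) (j : nat) : NoDup (Cset N Rs j).
Proof. apply NoDup_filter, seq_NoDup. Qed.

Lemma index_of_spec (i : nat) (o : list nat) :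
  In i o -> (index_of i o < length o)%nat /\ nth (index_of i o) o 0%nat = i.
Proof.
  induction o as [|a o IH]; simpl; intros Hi; [contradiction|].
  destruct (Nat.eq_dec i a) as [->|Hia]; [split; [lia|reflexivity]|].
  destruct Hi as [->|Hi]; [congruence|].
  destruct (IH Hi). split; [lia|assumption].
Qed.

Lemma index_of_nth (o : list nat) (n : nat) :
  NoDup o -> (n < length o)%nat -> index_of (nth n o 0%nat) o = n.
Proof.
  revert n; induction o as [|a o IH]; simpl; intros n Hnd Hn; [lia|].
  inversion Hnd as [|? ? Ha Hnd']; subst.
  destruct n as [|n].
  - destruct (Nat.eq_dec a a); congruence.
  - destruct (Nat.eq_dec (nth n o 0%nat) a) as [E|_].
    + exfalso. apply Ha. rewrite <- E. apply nth_In. lia.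
    + f_equal. apply IH; [assumption|lia].
Qed.

Lemma cyc_succ_In (o : list nat) (i s : nat) :
  (0 < length o)%nat -> In (cyc_succ o i s) o.
Proof. intros Hl. apply nth_In, Nat.mod_upper_bound. lia. Qed.

Lemma cyc_succ_ne (o : list nat) (i s : nat) :
  NoDup o -> In i o -> (3 <= length o)%nat -> (1 <= s <= 2)%nat ->
  cyc_succ o i s <> i.
Proof.
  intros Hnd Hi Hl Hs E.
  destruct (index_of_spec i o Hi) as [Hp Hnth].
  set (p := index_of i o) in *. set (L := length o) in *.
  assert (Hmod : ((p + s) mod L = p)%nat).
  { apply (proj1 (NoDup_nth o 0%nat) Hnd); [apply Nat.mod_upper_bound; lia|lia|].
    unfold cyc_succ in E. fold p L in E. congruence. }
  pose proof (Nat.div_mod_eq (p + s) L) as D. rewrite Hmod in D.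
  destruct ((p + s) / L)%nat; nia.
Qed.

Lemma cyc_succ_succ (o : list nat) (i : nat) :
  NoDup o -> (0 < length o)%nat -> cyc_succ o (cyc_succ o i 1) 1 = cyc_succ o i 2.
Proof.
  intros Hnd Hl. unfold cyc_succ at 1 2.
  rewrite index_of_nth by (assumption || (apply Nat.mod_upper_bound; lia)).
  rewrite Nat.Div0.add_mod_idemp_l, <- Nat.add_assoc. reflexivity.
Qed.

Lemma ahat_ext (N : nat) (Rs : nat -> list nat) (m m' : profile) (j : nat) :
  (forall k, fst (m' k) j = fst (m k) j) -> ahat N Rs m' j = ahat N Rs m j.
Proof. intros Hf. unfold ahat. f_equal. apply lsum_ext. auto. Qed.

Lemma tax_le_of_uA_le (u : nat -> (nat -> R) -> ER) (i : nat) (a : nat -> R)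
    (r t t' : R) :
  u i a = Fin r -> ER_le (uA u i a t') (uA u i a t) -> t <= t'.
Proof. unfold uA. intros ->. simpl. lra. Qed.

Lemma uA_ext (u : nat -> (nat -> R) -> ER) (i : nat) (a b : nat -> R) (t : R) :
  u i a = u i b -> uA u i a t = uA u i b t.
Proof. unfold uA. intros ->. reflexivity. Qed.

Definition penalty (ord : nat -> list nat) (m : profile) (i j : nat) : R :=
  snd (m i) j * (fst (m i) j - fst (m (iplus ord i j)) j) ^ 2.

Section Mechanism.

Variables (N : nat) (Rs ord : nat -> list nat) (A : nat -> R -> Prop)
  (u : nat -> (nat -> R) -> ER).
Hypothesis Hset : setting N Rs ord A u.

Lemma ord_facts (i j : nat) : (i < N)%nat -> In j (Rs i) ->
  NoDup (ord j) /\ (3 <= length (ord j))%nat /\ In i (ord j) /\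
  (forall k, In k (ord j) -> (k < N)%nat /\ In j (Rs k)).
Proof.
  intros Hi Hj.
  destruct Hset as (_ & HR & HC & HP & _).
  destruct (HR i Hi) as (_ & _ & HjN). specialize (HjN j Hj).
  pose proof (Permutation_sym (HP j HjN)) as Hperm.
  split; [|split; [|split]].
  - exact (Permutation_NoDup Hperm (Cset_NoDup N Rs j)).
  - rewrite <- (Permutation_length Hperm). auto.
  - apply (Permutation_in _ Hperm), Cset_In. auto.
  - intros k Hk. apply Cset_In, (Permutation_in _ (Permutation_sym Hperm)), Hk.
Qed.

Lemma iplus_ne (i j : nat) : (i < N)%nat -> In j (Rs i) -> iplus ord i j <> i.
Proof.
  intros Hi Hj. destruct (ord_facts i j Hi Hj) as (? & ? & ? & _).
  apply cyc_succ_ne; auto.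
Qed.

Lemma iplus2_ne (i j : nat) : (i < N)%nat -> In j (Rs i) -> iplus2 ord i j <> i.
Proof.
  intros Hi Hj. destruct (ord_facts i j Hi Hj) as (? & ? & ? & _).
  apply cyc_succ_ne; auto.
Qed.

Lemma iplus_user (i j : nat) : (i < N)%nat -> In j (Rs i) ->
  (iplus ord i j < N)%nat /\ In j (Rs (iplus ord i j)).
Proof.
  intros Hi Hj. destruct (ord_facts i j Hi Hj) as (_ & Hl & _ & Hmem).
  apply Hmem, cyc_succ_In. lia.
Qed.

Lemma iplus_iplus (i j : nat) : (i < N)%nat -> In j (Rs i) ->
  iplus ord (iplus ord i j) j = iplus2 ord i j.
Proof.
  intros Hi Hj. destruct (ord_facts i j Hi Hj) as (Hnd & Hl & _).
  apply cyc_succ_succ; [assumption|lia].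
Qed.

Lemma ahat_update_action (m : profile) (i j : nat) (c : R) :
  (i < N)%nat -> In j (Rs i) ->
  ahat N Rs (update m i (fupd (fst (m i)) j c, snd (m i))) j
  = / INR (length (Cset N Rs j))
    * (lsum (Cset N Rs j) (fun k => fst (m k) j) - fst (m i) j + c).
Proof.
  intros Hi Hj. unfold ahat. f_equal.
  rewrite (lsum_upd _ (fun k => fst (m k) j) _ i).
  - unfold update, fupd. simpl.
    destruct (Nat.eq_dec i i) as [_|]; [|congruence]. simpl.
    destruct (Nat.eq_dec j j); [reflexivity|congruence].
  - apply Cset_NoDup.
  - apply Cset_In. auto.
  - intros k Hk. unfold update. destruct (Nat.eq_dec k i); congruence.
Qed.

Definition tax_term (m : profile) (i j : nat) : R :=
  lij ord m i j * ahat N Rs m j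
  + snd (m i) j * (fst (m i) j - fst (m (iplus ord i j)) j) ^ 2
  - snd (m (iplus ord i j)) j
      * (fst (m (iplus ord i j)) j - fst (m (iplus2 ord i j)) j) ^ 2.

Lemma that_drop_price (m : profile) (i j : nat) :
  (i < N)%nat -> In j (Rs i) ->
  that N Rs ord (update m i (fst (m i), fupd (snd (m i)) j 0)) i
  = that N Rs ord m i - penalty ord m i j.
Proof.
  intros Hi Hj.
  set (m' := update m i (fst (m i), fupd (snd (m i)) j 0)).
  assert (Hfst : forall k, fst (m' k) = fst (m k)).
  { intros k. unfold m', update. destruct (Nat.eq_dec k i) as [->|]; reflexivity. }
  assert (Hsnd : forall k j', k <> i \/ j' <> j -> snd (m' k) j' = snd (m k) j').
  { intros k j' Hkj. unfold m', update, fupd.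
    destruct (Nat.eq_dec k i) as [->|]; [|reflexivity]. simpl.
    destruct (Nat.eq_dec j' j); [intuition|reflexivity]. }
  assert (Hsii : snd (m' i) j = 0).
  { unfold m', update, fupd. destruct (Nat.eq_dec i i); [|congruence]. simpl.
    destruct (Nat.eq_dec j j); congruence. }
  destruct Hset as (_ & HR & _).
  change (lsum (Rs i) (tax_term m' i) = lsum (Rs i) (tax_term m i) - penalty ord m i j).
  rewrite (lsum_upd _ (tax_term m i) _ j); [|apply HR; assumption|assumption|].
  - unfold tax_term, lij, penalty.
    rewrite !Hfst, Hsii.
    rewrite !(Hsnd _ j) by auto using iplus_ne, iplus2_ne.
    rewrite (ahat_ext N Rs m m' j) by (intros; rewrite Hfst; reflexivity).
    ring.
  - intros j' Hj'. unfold tax_term, lij. rewrite !Hfst, !(Hsnd _ j') by auto.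
    rewrite (ahat_ext N Rs m m' j') by (intros; rewrite Hfst; reflexivity).
    reflexivity.
Qed.

Variable m : profile.
Hypothesis Hnash : nash_equilibrium N Rs ord u m.

(* Step 1: at equilibrium every user obtains a finite valuation, since
   deviating so that \hat a_i = 0 in A_i already guarantees one. *)
Lemma equilibrium_util_finite (i : nat) :
  (i < N)%nat -> exists r, u i (fun j => ahat N Rs m j) = Fin r.
Proof.
  intros Hi.
  destruct Hset as (_ & HR & _ & _ & HA & HU).
  destruct (HR i Hi) as (_ & Hii & _).
  destruct (HA i Hi) as (_ & _ & _ & HA0).
  destruct (HU i Hi) as (_ & Hfin & _ & _).
  destruct Hnash as (Had & Hbest).
  set (c := fst (m i) i - lsum (Cset N Rs i) (fun k => fst (m k) i)).
  set (mi := (fupd (fst (m i)) i c, snd (m i))).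
  assert (Hzero : ahat N Rs (update m i mi) i = 0).
  { unfold mi. rewrite ahat_update_action by assumption. unfold c. ring. }
  destruct (Hfin (fun j => ahat N Rs (update m i mi) j)) as [r' Hr'].
  { rewrite Hzero. exact HA0. }
  assert (Hle := Hbest i Hi mi (Had i Hi)).
  unfold outcome_util, uA in Hle. rewrite Hr' in Hle.
  destruct (u i (fun j => ahat N Rs m j)) as [r|]; [eauto|contradiction].
Qed.

Lemma penalty_vanishes (i j : nat) :
  (i < N)%nat -> In j (Rs i) -> penalty ord m i j = 0.
Proof.
  intros Hi Hj.
  destruct (equilibrium_util_finite i Hi) as [r Hr].
  destruct Hnash as (Had & Hbest).
  set (mi := (fst (m i), fupd (snd (m i)) j 0)).
  assert (Hadm : admissible Rs i mi).
  { intros k Hk. unfold mi, fupd. simpl.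
    destruct (Nat.eq_dec k j); [lra|exact (Had i Hi k Hk)]. }
  assert (Hnonneg : 0 <= penalty ord m i j).
  { apply Rmult_le_pos; [exact (Had i Hi j Hj)|apply pow2_ge_0]. }
  assert (Hsame_u : u i (fun k => ahat N Rs (update m i mi) k)
                    = u i (fun k => ahat N Rs m k)).
  { destruct Hset as (_ & _ & _ & _ & _ & HU). apply (HU i Hi).
    intros k _. apply ahat_ext. intros k'. unfold update.
    destruct (Nat.eq_dec k' i) as [->|]; reflexivity. }
  assert (Hle := Hbest i Hi mi Hadm).
  unfold outcome_util in Hle.
  rewrite (uA_ext _ _ _ _ _ Hsame_u) in Hle.
  unfold mi in Hle. rewrite that_drop_price in Hle by assumption.
  apply tax_le_of_uA_le with (r := r) in Hle; [lra|exact Hr].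
Qed.

(* Step 3: the second penalty of (i, j) is the first penalty of (i^+, j). *)
Lemma next_penalty_vanishes (i j : nat) :
  (i < N)%nat -> In j (Rs i) ->
  snd (m (iplus ord i j)) j
    * (fst (m (iplus ord i j)) j - fst (m (iplus2 ord i j)) j) ^ 2 = 0.
Proof.
  intros Hi Hj. destruct (iplus_user i j Hi Hj) as [HkN Hjk].
  rewrite <- (iplus_iplus i j Hi Hj).
  exact (penalty_vanishes (iplus ord i j) j HkN Hjk).
Qed.

End Mechanism.

Theorem claim2 (N : nat) (Rs : nat -> list nat) (ord : nat -> list nat)
  (A : nat -> R -> Prop) (u : nat -> (nat -> R) -> ER) (m : profile) :
  setting N Rs ord A u ->
  nash_equilibrium N Rs ord u m ->
  (forall i j, (i < N)%nat -> In j (Rs i) ->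
     snd (m i) j * (fst (m i) j - fst (m (iplus ord i j)) j) ^ 2 = 0 /\
     snd (m (iplus ord i j)) j
       * (fst (m (iplus ord i j)) j - fst (m (iplus2 ord i j)) j) ^ 2 = 0) /\
  (forall i, (i < N)%nat ->
     that N Rs ord m i = lsum (Rs i) (fun j => lij ord m i j * ahat N Rs m j)).
Proof.
  intros Hset Hnash.
  assert (Hpen : forall i j, (i < N)%nat -> In j (Rs i) ->
     snd (m i) j * (fst (m i) j - fst (m (iplus ord i j)) j) ^ 2 = 0 /\
     snd (m (iplus ord i j)) j
       * (fst (m (iplus ord i j)) j - fst (m (iplus2 ord i j)) j) ^ 2 = 0).
  { intros i j Hi Hj. split.
    - exact (penalty_vanishes N Rs ord A u Hset m Hnash i j Hi Hj).
    - exact (next_penalty_vanishes N Rs ord A u Hset m Hnash i j Hi Hj). }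
  split; [exact Hpen|].
  intros i Hi. unfold that. apply lsum_ext. intros j Hj.
  destruct (Hpen i j Hi Hj) as [H1 H2]. rewrite H1, H2. ring.
Qed.
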